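(* Let $m\ge1$, $\Sigma=\{1,\ldots,m\}$, and let $\mu:\Sigma^*\to\Sigma^*$ be a morphism with $\mu(1)=1x$ for some $x\in\Sigma^+$, $|\mu(a)|>1$ for all $a\in\Sigma$, and frequency matrix $M$ non-singular with $|M^{-1}|<1$. Let $k$ be a positive integer and let $T_k=[\epsilon,\ldots,\epsilon,\vec 0,\ldots,\vec 0]$ be the $k$-template with $a_1=\cdots=a_{k+1}=\epsilon$ and $d_1=\cdots=d_{k-1}=\vec 0$. Then $T_k$ has only finitely many ancestors.
   Context: The Parikh map $\psi:\Sigma^*\to\mathbb{Z}^m$ is $\psi(w)=[|w|_1,\ldots,|w|_m]$ (row vector). The frequency matrix $M$ of $\mu$ has $M_{i,j}=|\mu(i)|_j$. For a real matrix $A$, $|A|=\sup_{v\neq0}|vA|/|v|$ with Euclidean norm on row vectors. A $k$-template is a $2k$-tuple $t=[a_1,\ldots,a_{k+1},d_1,\ldots,d_{k-1}]$ with each $a_i\in\{\epsilon,1,\ldots,m\}$ ($\epsilon$ the empty word) and each $d_i\in\mathbb{Z}^m$. Given $k$-templates $t_1=[a_1,\ldots,a_{k+1},d_1,\ldots,d_{k-1}]$ and $t_2=[A_1,\ldots,A_{k+1},D_1,\ldots,D_{k-1}]$, $t_2$ is a parent of $t_1$ if there are words $a_i',a_i''$ ($1\le i\le k+1$) with $\mu(A_i)=a_i'a_ia_i''$ for each $i$ and $\psi(a_{i+1}''a_{i+2}')-\psi(a_i''a_{i+1}')+D_iM=d_i$ for $1\le i\le k-1$. The ancestor relation is the transitive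 closure of the parent relation. *)

From HB Require Import structures.
From mathcomp Require Import all_boot all_order all_algebra.
From mathcomp Require Import boolp classical_sets reals Rstruct.
From Stdlib Require Rdefinitions.
Notation R := Rdefinitions.R.
Set Implicit Arguments. Unset Strict Implicit. Unset Printing Implicit Defensive.
Import Order.TTheory GRing.Theory Num.Theory.
Local Open Scope ring_scope.

(* Alphabet Sigma = {1..m} is 'I_m (letter i+1 of the paper is ordinal i).
   Words are seq 'I_m.  A morphism is given by its images of letters. *)
Definition word (m : nat) := seq 'I_m.

Definition mu_word m (mu : 'I_m -> word m) (w : word m) : word m :=
  flatten (map mu w).

Definition parikh m (w : word m) : 'rV[int]_m := \row_j (count_mem j w)%:Z.

Definition freq_mx m (mu : 'I_m -> word m) : 'M[int]_m :=
  \matrix_(i, j) (count_mem j (mu i))%:Z.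

Definition enorm m (v : 'rV[R]_m) : R := Num.sqrt (\sum_j v 0 j ^+ 2).

Definition opnorm m (A : 'M[R]_m) : R :=
  sup ((fun v : 'rV[R]_m => enorm (v *m A) / enorm v) @` [set v | v != 0])%classic.

(* epsilon is None, a letter c is Some c *)
Definition letter m (a : option 'I_m) : word m :=
  if a is Some c then [:: c] else [::].

(* a k-template [a_1..a_{k+1}, d_1..d_{k-1}] (indices shifted to start at 0) *)
Definition template m k :=
  ((k.+1).-tuple (option 'I_m) * (k.-1).-tuple 'rV[int]_m)%type.

(* t2 = (A, D) is a parent of t1 = (a, d) *)
Definition parent m (mu : 'I_m -> word m) k (t2 t1 : template m k) : Prop :=
  let: (A, D) := t2 in
  let: (a, d) := t1 in
  exists a' a'' : nat -> word m,
    (forall i, (i < k.+1)%N ->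
       mu_word mu (letter (nth None A i)) = a' i ++ letter (nth None a i) ++ a'' i)
    /\ (forall i, (i < k.-1)%N ->
       parikh (a'' i.+1 ++ a' i.+2) - parikh (a'' i ++ a' i.+1)
         + nth 0 D i *m freq_mx mu = nth 0 d i).

Definition ancestor m (mu : 'I_m -> word m) k : template m k -> template m k -> Prop :=
  Relation_Operators.clos_trans _ (parent mu (k:=k)).

Definition Tk m k : template m k :=
  ([tuple None | _ < k.+1], [tuple 0 | _ < k.-1]).

From HB Require Import structures.
From mathcomp Require Import all_boot all_order all_algebra.
From mathcomp Require Import boolp classical_sets reals Rstruct.
From mathcomp Require Import zify ring lra.
Import Order.TTheory GRing.Theory Num.Theory.
Local Open Scope ring_scope.
Set Implicit Arguments. Unset Strict Implicit. Unset Printing Implicit Defensive.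

(* If t2 is a parent of t1, each shift satisfies D_i M = d_i - c_i, where c_i
   is a difference of Parikh vectors of words no longer than twice the longest
   image mu(a), so |c_i| <= C for a constant C.  As |M^-1| = r < 1, this gives
   |D_i| <= r (|d_i| + C), hence the ball of radius rC/(1 - r) is stable under
   taking parents.  All shifts of T_k are 0, so every ancestor has its shifts
   in that ball, and there are finitely many such templates. *)

Section EuclideanNorm.
Variable m : nat.
Implicit Types (u v : 'rV[R]_m) (A : 'M[R]_m).

Lemma enorm_ge0 v : 0 <= enorm v.
Proof. exact: sqrtr_ge0. Qed.

Lemma enorm_sqr v : enorm v ^+ 2 = \sum_j v 0 j ^+ 2.
Proof. by rewrite sqr_sqrtr // sumr_ge0 // => j _; apply: sqr_ge0. Qed.

Lemma enorm_le v y : 0 <= y -> \sum_j v 0 j ^+ 2 <= y ^+ 2 -> enorm v <= y.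
Proof. by move=> y0 hv; rewrite -(ger0_norm y0) -sqrtr_sqr ler_sqrt ?sqr_ge0. Qed.

Lemma normr_coord_le_enorm v j : `|v 0 j| <= enorm v.
Proof.
rewrite -sqrtr_sqr ler_sqrt ?sumr_ge0 // => [|i _]; last exact: sqr_ge0.
by rewrite (bigD1 j) //= lerDl sumr_ge0 // => i _; apply: sqr_ge0.
Qed.

Lemma enorm_eq0 v : enorm v = 0 -> v = 0.
Proof.
move=> v0; apply/rowP => j; apply/eqP; rewrite mxE -normr_le0 -v0.
exact: normr_coord_le_enorm.
Qed.

Lemma enorm_gt0 v : v != 0 -> 0 < enorm v.
Proof.
by move=> v0; rewrite lt_def enorm_ge0 andbT; apply: contra_neq v0 => /enorm_eq0.
Qed.

Lemma enorm0 : enorm (0 : 'rV[R]_m) = 0.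
Proof. by rewrite /enorm big1 ?sqrtr0 // => j _; rewrite mxE expr0n. Qed.

Lemma enormN v : enorm (- v) = enorm v.
Proof. by rewrite /enorm; congr Num.sqrt; apply: eq_bigr => j _; rewrite mxE sqrrN. Qed.

Lemma enorm_le_sum v (K : 'I_m -> R) : (forall j, `|v 0 j| <= K j) ->
  enorm v <= \sum_j K j.
Proof.
move=> hK; have K0 j : 0 <= K j by apply: le_trans (hK j).
have le_sum j : K j <= \sum_i K i.
  by rewrite (bigD1 j) //= lerDl sumr_ge0.
apply: enorm_le; first exact: sumr_ge0.
rewrite expr2 mulr_suml; apply: ler_sum => j _.
rewrite -real_normK ?num_real // expr2.
by apply: ler_pM => //; apply: le_trans (hK j) (le_sum j).
Qed.

Lemma cauchy_schwarz u v : \sum_j u 0 j * v 0 j <= enorm u * enorm v.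
Proof.
have [-> | u0] := eqVneq u 0.
  by rewrite big1 ?mulr_ge0 ?enorm_ge0 // => j _; rewrite mxE mul0r.
have [-> | v0] := eqVneq v 0.
  by rewrite big1 ?mulr_ge0 ?enorm_ge0 // => j _; rewrite mxE mulr0.
have a0 := enorm_gt0 u0; have b0 := enorm_gt0 v0.
set a := enorm u in a0 *; set b := enorm v in b0 *.
have : 0 <= \sum_j (b * u 0 j - a * v 0 j) ^+ 2.
  by apply: sumr_ge0 => j _; apply: sqr_ge0.
have -> : \sum_j (b * u 0 j - a * v 0 j) ^+ 2 = b ^+ 2 * \sum_j u 0 j ^+ 2
    + a ^+ 2 * \sum_j v 0 j ^+ 2 - 2 * a * b * \sum_j u 0 j * v 0 j.
  rewrite !mulr_sumr -big_split -sumrB /=; apply: eq_bigr => j _; ring.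
rewrite -!enorm_sqr -/a -/b => h.
have ab0 : 0 < 2 * a * b by rewrite !mulr_gt0.
rewrite -subr_ge0 -(pmulr_rge0 _ ab0).
by have -> : 2 * a * b * (a * b - \sum_j u 0 j * v 0 j) =
  b ^+ 2 * a ^+ 2 + a ^+ 2 * b ^+ 2 - 2 * a * b * \sum_j u 0 j * v 0 j by ring.
Qed.

Lemma enormD u v : enorm (u + v) <= enorm u + enorm v.
Proof.
apply: enorm_le; first by rewrite addr_ge0 ?enorm_ge0.
have -> : \sum_j (u + v) 0 j ^+ 2 =
    \sum_j u 0 j ^+ 2 + \sum_j v 0 j ^+ 2 + 2 * \sum_j u 0 j * v 0 j.
  rewrite mulr_sumr -!big_split /=; apply: eq_bigr => j _; rewrite mxE; ring.
rewrite -!enorm_sqr; have := cauchy_schwarz u v; nra.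
Qed.

Lemma enormB u v : enorm (u - v) <= enorm u + enorm v.
Proof. by rewrite -(enormN v) enormD. Qed.

Lemma enorm_mulmx_le v A : enorm (v *m A) <= opnorm A * enorm v.
Proof.
have bound w : enorm (w *m A) <= enorm w * \sum_j \sum_i `|A i j|.
  rewrite mulr_sumr; apply: enorm_le_sum => j; rewrite mxE mulr_sumr.
  apply: le_trans (ler_norm_sum _ _ _) _; apply: ler_sum => i _.
  by rewrite normrM ler_wpM2r // normr_coord_le_enorm.
have [-> | v0] := eqVneq v 0; first by rewrite mul0mx enorm0 mulr0.
rewrite -ler_pdivrMr ?enorm_gt0 //; apply: ub_le_sup; last by exists v.
exists (\sum_j \sum_i `|A i j|) => _ [w /= w0 <-].
by rewrite ler_pdivrMr ?enorm_gt0 // mulrC.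
Qed.

End EuclideanNorm.

Local Notation realmx A := (map_mx (fun z : int => z%:~R : R) A).

(* [r * C / (1 - r)] is the fixed point of [B |-> r * (B + C)]. *)
Lemma enorm_le_fixed_radius m (A : 'M[R]_m) r C (v c : 'rV[R]_m) :
  0 <= r -> r < 1 -> (forall w, enorm w <= r * enorm (w *m A)) ->
  enorm c <= C -> enorm (c + v *m A) <= r * C / (1 - r) ->
  enorm v <= r * C / (1 - r).
Proof.
move=> r0 r1 expanding hc hd; set B := r * C / (1 - r) in hd *.
have vA_le : enorm (v *m A) <= B + C.
  by rewrite -(addKr c (v *m A)) addrC; apply: le_trans (enormB _ _) (lerD hd hc).
have -> : B = r * (B + C) by rewrite /B; field; rewrite subr_eq0 gt_eqF.
by apply: le_trans (expanding v) _; rewrite ler_wpM2l.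
Qed.

Lemma enorm_parikh_le m (w : word m) : enorm (realmx (parikh w)) <= (size w * m)%:R.
Proof.
apply: le_trans (enorm_le_sum (K := fun _ => (size w)%:R) _) _.
  by move=> j; rewrite !mxE -intr_norm ler_nat count_size.
by rewrite sumr_const card_ord natrM mulr_natr.
Qed.

Lemma enorm_parikhB_le m (w1 w2 : word m) :
  enorm (realmx (parikh w1 - parikh w2)) <= ((size w1 + size w2) * m)%:R.
Proof.
rewrite map_mxB mulnDl natrD; apply: le_trans (enormB _ _) _.
by rewrite lerD ?enorm_parikh_le.
Qed.

Lemma size_mu_letter_le m (mu : 'I_m -> word m) (o : option 'I_m) :
  (size (mu_word mu (letter o)) <= \max_c size (mu c))%N.
Proof. by case: o => [c|] //=; rewrite /mu_word /= cats0 leq_bigmax. Qed.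

Definition shifts_within m k (B : R) (t : template m k) :=
  forall i, (i < k.-1)%N -> enorm (realmx (nth 0 t.2 i)) <= B.

Lemma templates_bounded_finite m k N : exists s : seq (template m k),
  forall t : template m k,
  (forall i, (i < k.-1)%N -> forall j, (absz (nth 0 t.2 i 0 j)%R <= N)%N) -> t \in s.
Proof.
(* entries in [-N, N] are encoded in the finite type 'I_(N + N).+1 *)
pose toZ (v : 'rV['I_(N + N).+1]_m) : 'rV[int]_m := \row_j ((v 0 j : nat)%:Z - N%:Z).
pose ofZ (v : 'rV[int]_m) : 'rV['I_(N + N).+1]_m := \row_j inord `|v 0 j + N%:Z|.
pose code := ((k.+1).-tuple (option 'I_m) * (k.-1).-tuple 'rV['I_(N + N).+1]_m)%type.
pose embed (t : code) : template m k := (t.1, map_tuple toZ t.2).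
exists (map embed (enum {: code})).
move=> [a D] /= hD; have -> : D = map_tuple toZ (map_tuple ofZ D).
  apply: eq_from_tnth => i; rewrite !tnth_map; apply/rowP => j.
  have := hD i (ltn_ord i) j; rewrite -tnth_nth => hDij; rewrite !mxE inordK; lia.
by rewrite (map_f embed (mem_enum _ (a, map_tuple ofZ D))).
Qed.

Lemma templates_shifts_within_finite m k B : 0 <= B ->
  exists s : seq (template m k), forall t, shifts_within B t -> t \in s.
Proof.
move=> B0; have [s hs] := templates_bounded_finite m k (Num.Def.archi_bound B).
exists s => t ht; apply: hs => i hi j.
suff : (`|nth 0 t.2 i 0 j|%:R < (Num.Def.archi_bound B)%:R :> R).
  by rewrite ltr_nat => /ltnW.
rewrite natr_absz intr_norm; apply: le_lt_trans (archi_boundP B0).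
apply: le_trans (ht i hi).
by have := normr_coord_le_enorm (realmx (nth 0 t.2 i)) j; rewrite mxE.
Qed.

Section AncestorShifts.
Variables (m : nat) (mu : 'I_m -> word m) (k : nat) (r : R).
Hypotheses (r_ge0 : 0 <= r) (r_lt1 : r < 1).
Hypothesis freq_expanding :
  forall v : 'rV[R]_m, enorm v <= r * enorm (v *m realmx (freq_mx mu)).

(* 4 * max_c |mu c| bounds the total length of the two words whose Parikh
   vectors form the correction in the parent relation. *)
Definition shift_radius : R := r * ((4 * \max_c size (mu c)) * m)%:R / (1 - r).

Lemma shift_radius_ge0 : 0 <= shift_radius.
Proof. by rewrite divr_ge0 ?mulr_ge0 // subr_ge0 ltW. Qed.

Lemma parent_shifts_within (t2 t1 : template m k) : parent mu t2 t1 ->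
  shifts_within shift_radius t1 -> shifts_within shift_radius t2.
Proof.
case: t2 t1 => [A D] [a d] [a' [a'' [hmu hd]]] hin i hi /=.
set L := \max_c size (mu c) in hin *.
have hsz j : (j < k.+1)%N -> (size (a' j) + size (a'' j) <= L)%N.
  move=> hj; have := size_mu_letter_le mu (nth None A j).
  by rewrite hmu // !size_cat; lia.
have [h0 h1 h2] : [/\ i < k.+1, i.+1 < k.+1 & i.+2 < k.+1]%N by split; lia.
apply: (enorm_le_fixed_radius r_ge0 r_lt1 freq_expanding
  (c := realmx (parikh (a'' i.+1 ++ a' i.+2) - parikh (a'' i ++ a' i.+1)))).
  apply: le_trans (enorm_parikhB_le _ _) _; rewrite ler_nat leq_mul2r !size_cat.
  by have := hsz _ h0; have := hsz _ h1; have := hsz _ h2; lia.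
by rewrite -map_mxM -map_mxD hd //; apply: hin.
Qed.

Lemma ancestor_shifts_within (t2 t1 : template m k) : ancestor mu t2 t1 ->
  shifts_within shift_radius t1 -> shifts_within shift_radius t2.
Proof.
elim=> [? ? /parent_shifts_within // | ? ? ? _ IH1 _ IH2 /IH2/IH1 //].
Qed.

Lemma Tk_shifts_within : shifts_within shift_radius (Tk m k).
Proof.
move=> i hi; rewrite /= (nth_mktuple _ _ (Ordinal hi)) map_mx0 enorm0.
exact: shift_radius_ge0.
Qed.

End AncestorShifts.

Theorem lemma4 (m : nat) (hm : (0 < m)%N) (mu : 'I_m -> word m)
  (x : word m) (hx : x != [::])
  (hmu1 : mu (Ordinal hm) = Ordinal hm :: x)
  (hlen : forall a : 'I_m, (1 < size (mu a))%N)
  (hdet : \det (freq_mx mu) != 0)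
  (hnorm : opnorm (invmx (map_mx (fun z : int => z%:~R : R) (freq_mx mu))) < 1)
  (k : nat) (hk : (0 < k)%N) :
  exists s : seq (template m k),
    forall t : template m k, ancestor mu t (Tk m k) -> t \in s.
Proof.
set M := realmx (freq_mx mu) in hnorm.
have M_unit : M \in unitmx by rewrite unitmxE (det_map_mx intr) unitfE intr_eq0.
set r := Num.max (opnorm (invmx M)) 0.
have r_ge0 : 0 <= r by rewrite le_max lexx orbT.
have r_lt1 : r < 1 by rewrite gt_max hnorm ltr01.
have expanding v : enorm v <= r * enorm (v *m M).
  rewrite -{1}(mulmxK M_unit v); apply: le_trans (enorm_mulmx_le _ _) _.
  by rewrite ler_wpM2r ?enorm_ge0 // le_max lexx.
have [s hs] := templates_shifts_within_finite m k (shift_radius_ge0 mu r_ge0 r_lt1).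
exists s => t /(ancestor_shifts_within r_ge0 r_lt1 expanding) ancestor_within.
exact/hs/ancestor_within/Tk_shifts_within.
Qed.
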